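(* Let $\mathbf{Q}^\star,\mathbf{Q},\mathbf{Q}_r,\mathbf{H}$ be as in the context, let $\lambda_j^\star$ be the $j$-th eigenvalue of $\mathbf{Q}^\star$, and define $\delta^\star=\min\{\min_{j\in[r-1]}|\lambda_j^\star-\lambda_{j+1}^\star|,\ \lambda_r^\star\}$. If $\|\mathbf{H}\|_2\le\delta^\star/2$, then $$\|\mathbf{Q}^\star-\mathbf{Q}_r\|_2\le O\!\left(\lambda_{r+1}^\star+\frac{\lambda_1^\star}{\delta^\star}\|\mathbf{H}\|_2\right).$$
   Context: $\mathbf{Q}^\star\in\mathbb{C}^{n\times n}$ is Hermitian positive semi-definite of rank $r^\star$, eigenvalues $\lambda_1^\star\ge\lambda_2^\star\ge\dots\ge 0$ (zero beyond the rank). $\mathbf{H}\in\mathbb{C}^{n\times n}$ is arbitrary (not necessarily Hermitian), $\mathbf{Q}=\mathbf{Q}^\star+\mathbf{H}$, and $\mathbf{Q}_r=\mathbf{V}_r\boldsymbol{\Sigma}_r\mathbf{V}_r^\dagger$ with $\boldsymbol{\Sigma}_r$ the diagonal matrix of the top-$r$ singular values of $\mathbf{Q}$ and $\mathbf{V}_r$ the corresponding left singular vectors. $\|\cdot\|_2$ is the spectral norm; $O(\cdot)$ hides an absolute constant. *)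

From HB Require Import structures.
From mathcomp Require Import all_boot all_order all_algebra.
From mathcomp Require Import complex.
From mathcomp Require Import boolp classical_sets reals.

Set Implicit Arguments.
Unset Strict Implicit.
Unset Printing Implicit Defensive.

Import Order.TTheory GRing.Theory Num.Theory.
Local Open Scope ring_scope.
Local Open Scope classical_set_scope.

Definition adj {R : realType} m n (A : 'M[R[i]]_(m, n)) : 'M[R[i]]_(n, m) :=
  (map_mx (@Num.conj R[i]) A)^T.

Definition unitary {R : realType} n (A : 'M[R[i]]_n) : Prop :=
  A *m adj A = 1%:M.

Definition vnorm {R : realType} n (x : 'cV[R[i]]_n) : R :=
  Num.sqrt (\sum_(i < n) (ComplexField.Normc.normc (x i ord0)) ^+ 2).

Definition specnorm {R : realType} n (A : 'M[R[i]]_n) : R :=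
  sup [set vnorm (A *m x) | x in [set x : 'cV[R[i]]_n | vnorm x = 1]].

Definition rdiag {R : realType} n (d : nat -> R) : 'M[R[i]]_n :=
  diag_mx (\row_(j < n) (d j)%:C%C).

Definition sorted_spectrum {R : realType} n (d : nat -> R) : Prop :=
  (forall j k, (j <= k)%N -> (k < n)%N -> d k <= d j) /\
  (forall j, (j < n)%N -> 0 <= d j) /\
  (forall j, (n <= j)%N -> d j = 0).

(* (lam, U) is a spectral decomposition of the Hermitian PSD matrix Qs:
   Qs = U diag(lam) U^dagger with U unitary, lam sorted nonincreasing, >= 0.
   lam j (0-based) is the (j+1)-th eigenvalue of Qs; lam j = 0 for j >= n. *)
Definition psd_eigendecomp {R : realType} n (Qs : 'M[R[i]]_n)
    (lam : nat -> R) (U : 'M[R[i]]_n) : Prop :=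
  unitary U /\ sorted_spectrum n lam /\ Qs = U *m rdiag n lam *m adj U.

Definition svd {R : realType} n (Q : 'M[R[i]]_n)
    (U : 'M[R[i]]_n) (s : nat -> R) (W : 'M[R[i]]_n) : Prop :=
  unitary U /\ unitary W /\ sorted_spectrum n s /\ Q = U *m rdiag n s *m adj W.

(* Q_r = V_r Sigma_r V_r^dagger where V_r are the first r columns of U
   (left singular vectors) and Sigma_r the top r singular values. *)
Definition trunc_r {R : realType} n (r : nat) (U : 'M[R[i]]_n) (s : nat -> R)
  : 'M[R[i]]_n :=
  U *m rdiag n (fun j => if (j < r)%N then s j else 0) *m adj U.

(* delta* = min( min_{j in [r-1]} |lam_j - lam_{j+1}|, lam_r ) (1-based);
   with 0-based lam: min over j < r-1 of |lam j - lam (j+1)| and lam (r-1). *)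
Definition delta_star {R : realType} (lam : nat -> R) (r : nat) : R :=
  \big[Num.min/lam r.-1]_(j < r.-1) `|lam j - lam j.+1|.

From HB Require Import structures.
From mathcomp Require Import all_boot all_order all_algebra.
From mathcomp Require Import complex.
From mathcomp Require Import boolp classical_sets reals.
From mathcomp Require Import ring lra.
Import Order.TTheory GRing.Theory Num.Theory.
Set Implicit Arguments.
Unset Strict Implicit.
Unset Printing Implicit Defensive.
Local Open Scope ring_scope.

(* Write Qs = V L V^+ and Qs + H = U S W^+, and pass to the coordinates
   A = V^+ U, B = V^+ W (indices 0-based as in the statement).  Then
   L B + V^+ H W = A S and L A + V^+ H^+ U = B S; entrywise these give
   (s_j - lam_k)^2 |A_kj|^2 <= 2 |(V^+ H W)_kj|^2 + 2 |(V^+ H^+ U)_kj|^2, so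
   every row and every column of ((s_j - lam_k) A_kj) has squared mass at
   most 4 |H|^2.  In the same coordinates Qs - Q_r becomes
   Z = L A - A S_r, with Z_kj = (lam_k - s_j) A_kj for j < r and
   Z_kj = lam_k A_kj for j >= r.  The columns j < r contribute at most
   4 r |H|^2 to |Z|_F^2; the entries with j >= r and lam_k > 2 s_r
   (so k < r) satisfy lam_k <= 2 (lam_k - s_j) and contribute at most
   16 r |H|^2; what remains is a diagonal rescaling of A by factors at most
   2 s_r + lam_r.  Weyl's inequality, here s_r^2 <= 2 lam_r^2 + 2 |H|^2, and
   the telescoping bound r delta* <= lam_0 then give the theorem. *)

Local Notation normc := ComplexField.Normc.normc.

Section ComplexModulus.
Variable R : realType.
Implicit Types (x : R) (z : R[i]).

Lemma normc_complex z : (normc z)%:C%C = `|z|.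
Proof. by case: z. Qed.

Lemma normc_ge0 z : 0 <= normc z.
Proof. by rewrite -ler0c normc_complex. Qed.

Lemma normc_conj z : normc (Num.conj z) = normc z.
Proof. by apply: complexI; rewrite !normc_complex norm_conjC. Qed.

Lemma normc_real x : normc x%:C%C = `|x|.
Proof. by rewrite /= expr0n /= addr0 sqrtr_sqr. Qed.

Lemma sqr_normcC z : ((normc z) ^+ 2)%:C%C = Num.conj z * z.
Proof. by rewrite rmorphXn /= normc_complex normCKC. Qed.

Lemma real_le_normc x z : x%:C%C = z -> x <= normc z.
Proof. by move=> <-; rewrite normc_real ler_norm. Qed.

Lemma normc_sum (I : finType) (F : I -> R[i]) :
  normc (\sum_i F i) <= \sum_i normc (F i).
Proof.
elim/big_rec2: _ => [|i y z _ Hz]; first by rewrite ComplexField.Normc.normc0.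
by rewrite (le_trans (le_normcD _ _)) // lerD2l.
Qed.

Lemma sqr_sum_mul_le (I : finType) (a b : I -> R) :
  (\sum_i a i * b i) ^+ 2 <= (\sum_i a i ^+ 2) * (\sum_i b i ^+ 2).
Proof.
have lagrange : \sum_i \sum_j (a i * b j - a j * b i) ^+ 2 =
   2 * ((\sum_i a i ^+ 2) * (\sum_i b i ^+ 2)) - 2 * (\sum_i a i * b i) ^+ 2.
  have P1 : (\sum_i a i ^+ 2) * (\sum_i b i ^+ 2) =
      \sum_i \sum_j (a i ^+ 2 * b j ^+ 2) by rewrite big_distrlr.
  have P2 : (\sum_i a i ^+ 2) * (\sum_i b i ^+ 2) =
      \sum_i \sum_j (a j ^+ 2 * b i ^+ 2).
    rewrite mulrC big_distrlr; apply: eq_bigr => i _; apply: eq_bigr => j _ /=.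
    ring.
  have P3 : (\sum_i a i * b i) ^+ 2 =
      \sum_i \sum_j ((a i * b i) * (a j * b j)) by rewrite expr2 big_distrlr.
  have E : \sum_i \sum_j (a i * b j - a j * b i) ^+ 2 =
     \sum_i (\sum_j (a i ^+ 2 * b j ^+ 2) + \sum_j (a j ^+ 2 * b i ^+ 2)
     - 2 * \sum_j ((a i * b i) * (a j * b j))).
    apply: eq_bigr => i _; rewrite mulr_sumr -big_split -sumrB /=.
    by apply: eq_bigr => j _; ring.
  by rewrite E sumrB big_split -mulr_sumr /= -P1 -P2 -P3; ring.
have : 0 <= \sum_i \sum_j (a i * b j - a j * b i) ^+ 2.
  by apply: sumr_ge0 => i _; apply: sumr_ge0 => j _; apply: sqr_ge0.
by rewrite lagrange subr_ge0 ler_pM2l.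
Qed.

Lemma normc_sum_mul_sqr_le (I : finType) (a b : I -> R[i]) :
  normc (\sum_i a i * b i) ^+ 2 <=
  (\sum_i normc (a i) ^+ 2) * (\sum_i normc (b i) ^+ 2).
Proof.
apply: le_trans (sqr_sum_mul_le (fun i => normc (a i)) (fun i => normc (b i))).
rewrite ler_sqr ?nnegrE ?normc_ge0 ?sumr_ge0 // => [|i _]; last first.
  by rewrite mulr_ge0 ?normc_ge0.
apply: le_trans (normc_sum _) _; apply: ler_sum => i _.
by rewrite ComplexField.Normc.normcM.
Qed.

End ComplexModulus.

Section Adjoint.
Variable R : realType.
Local Notation C := R[i].

Lemma adjM m n p (A : 'M[C]_(m, n)) (B : 'M[C]_(n, p)) :
  adj (A *m B) = adj B *m adj A.
Proof. by rewrite /adj map_mxM trmx_mul. Qed.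

Lemma adjK m n (A : 'M[C]_(m, n)) : adj (adj A) = A.
Proof. by apply/matrixP => i j; rewrite !mxE conjCK. Qed.

Lemma adjD m n (A B : 'M[C]_(m, n)) : adj (A + B) = adj A + adj B.
Proof. by apply/matrixP => i j; rewrite !mxE rmorphD. Qed.

Lemma adj_rdiag n (d : nat -> R) : adj (rdiag n d) = rdiag n d.
Proof.
apply/matrixP => i j; rewrite !mxE eq_sym.
case: eqP => [->|_]; rewrite /= ?mulr1n ?mulr0n ?rmorph0 //.
by apply: conj_Creal; rewrite complex_real.
Qed.

Lemma unitary_adj_mul n (U : 'M[C]_n) : unitary U -> adj U *m U = 1%:M.
Proof. exact: mulmx1C. Qed.

End Adjoint.

Section SquaredNorm.
Variable R : realType.
Local Notation C := R[i].

Definition sqnorm m (x : 'cV[C]_m) : R := \sum_i normc (x i 0) ^+ 2.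

Definition sqfrob m n (M : 'M[C]_(m, n)) : R := \sum_i \sum_j normc (M i j) ^+ 2.

Lemma sqnorm_ge0 m (x : 'cV[C]_m) : 0 <= sqnorm x.
Proof. by apply: sumr_ge0 => i _; apply: sqr_ge0. Qed.

Lemma sqnormC m (x : 'cV[C]_m) : (sqnorm x)%:C%C = (adj x *m x) 0 0.
Proof.
rewrite /sqnorm rmorph_sum !mxE; apply: eq_bigr => i _.
by have := sqr_normcC (x i 0); rewrite !mxE => <-.
Qed.

Lemma sqnorm_isometry n m (U : 'M[C]_(n, m)) (x : 'cV[C]_m) :
  adj U *m U = 1%:M -> sqnorm (U *m x) = sqnorm x.
Proof.
move=> HU; apply: complexI.
by rewrite !sqnormC adjM -mulmxA (mulmxA (adj U)) HU mul1mx.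
Qed.

Lemma sqnorm_eq0 m (x : 'cV[C]_m) : sqnorm x = 0 -> x = 0.
Proof.
move=> /eqP; rewrite psumr_eq0 => [/allP x0|i _]; last exact: sqr_ge0.
apply/matrixP => i j; rewrite ord1 mxE; apply: ComplexField.Normc.eq0_normc.
by have := x0 i (mem_index_enum _); rewrite /= sqrf_eq0 => /eqP.
Qed.

Lemma sqnorm0 m : sqnorm (0 : 'cV[C]_m) = 0.
Proof.
by rewrite /sqnorm big1 // => i _; rewrite mxE ComplexField.Normc.normc0 expr0n.
Qed.

Lemma sqnormZ m (c : R) (x : 'cV[C]_m) : sqnorm (c%:C%C *: x) = c ^+ 2 * sqnorm x.
Proof.
rewrite /sqnorm mulr_sumr; apply: eq_bigr => i _.
by rewrite !mxE ComplexField.Normc.normcM normc_real exprMn real_normK ?num_real.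
Qed.

Lemma sqnormD_le m (x y : 'cV[C]_m) : sqnorm (x + y) <= 2 * sqnorm x + 2 * sqnorm y.
Proof.
rewrite /sqnorm !mulr_sumr -big_split; apply: ler_sum => i _ /=; rewrite mxE.
have := le_normcD (x i 0) (y i 0); have := normc_ge0 (x i 0 + y i 0).
have := normc_ge0 (x i 0); have := normc_ge0 (y i 0).
move: (normc (x i 0 + y i 0)) (normc (x i 0)) (normc (y i 0)) => a b c c0 b0 a0 ab.
have : a ^+ 2 <= (b + c) ^+ 2 by rewrite ler_sqr ?nnegrE ?addr_ge0.
have := sqr_ge0 (b - c); nra.
Qed.

Lemma sqnormD3_le m (x y z : 'cV[C]_m) :
  sqnorm (x + y + z) <= 3 * (sqnorm x + sqnorm y + sqnorm z).
Proof.
rewrite /sqnorm -!big_split mulr_sumr; apply: ler_sum => i _ /=; rewrite !mxE.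
have := le_normcD (x i 0 + y i 0) (z i 0); have := le_normcD (x i 0) (y i 0).
have := normc_ge0 (x i 0 + y i 0 + z i 0); have := normc_ge0 (x i 0).
have := normc_ge0 (y i 0); have := normc_ge0 (z i 0).
move: (normc (_ + _ + _)) (normc (x i 0 + y i 0)) (normc (x i 0)).
move: (normc (y i 0)) (normc (z i 0)) => e f a b d f0 e0 d0 a0 bde abf.
have : a ^+ 2 <= (d + e + f) ^+ 2.
  by rewrite ler_sqr ?nnegrE ?addr_ge0 // (le_trans abf) // lerD2r.
have := sqr_ge0 (d - e); have := sqr_ge0 (d - f); have := sqr_ge0 (e - f); nra.
Qed.

Lemma sqnorm_mul_le_sqfrob m n (M : 'M[C]_(m, n)) (x : 'cV[C]_n) :
  sqnorm (M *m x) <= sqfrob M * sqnorm x.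
Proof.
rewrite /sqnorm /sqfrob mulr_suml; apply: ler_sum => i _; rewrite mxE.
exact: normc_sum_mul_sqr_le.
Qed.

Lemma sqfrob_ge0 m n (M : 'M[C]_(m, n)) : 0 <= sqfrob M.
Proof. by do 2!(apply: sumr_ge0 => ? _); apply: sqr_ge0. Qed.

Lemma sqr_normc_inner_le m (y z : 'cV[C]_m) :
  normc ((adj y *m z) 0 0) ^+ 2 <= sqnorm y * sqnorm z.
Proof.
have -> : sqnorm y = \sum_j normc (adj y 0 j) ^+ 2.
  by apply: eq_bigr => j _; rewrite !mxE normc_conj.
by rewrite mxE; apply: (normc_sum_mul_sqr_le (adj y 0) (z ^~ 0)).
Qed.

Lemma vnorm_eq1 m (x : 'cV[C]_m) : (vnorm x = 1) <-> (sqnorm x = 1).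
Proof.
rewrite /vnorm -/(sqnorm x); split => [x1|x1]; last by rewrite x1 sqrtr1.
by rewrite -(sqr_sqrtr (sqnorm_ge0 x)) x1 expr1n.
Qed.

Lemma exists_sqnorm1 n : (0 < n)%N -> exists x : 'cV[C]_n, sqnorm x = 1.
Proof.
move=> n_gt0; exists (delta_mx (Ordinal n_gt0) 0).
rewrite /sqnorm (bigD1 (Ordinal n_gt0)) //= big1 => [|i i_neq].
  by rewrite !mxE !eqxx ComplexField.Normc.normc1 expr1n addr0.
by rewrite !mxE (negbTE i_neq) ComplexField.Normc.normc0 expr0n.
Qed.

End SquaredNorm.

Section OperatorBound.
Variable R : realType.
Local Notation C := R[i].

Definition sqop_bound n (M : 'M[C]_n) (b : R) :=
  forall x : 'cV_n, sqnorm (M *m x) <= b * sqnorm x.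

Lemma sqop_bound_adj n (M : 'M[C]_n) b :
  0 <= b -> sqop_bound M b -> sqop_bound (adj M) b.
Proof.
move=> b0 bM x; set z := adj M *m x.
have zz : (sqnorm z)%:C%C = (adj x *m (M *m z)) 0 0.
  by rewrite sqnormC /z adjM adjK !mulmxA.
have z2 : sqnorm z ^+ 2 <= sqnorm x * (b * sqnorm z).
  apply: le_trans (le_trans _ (sqr_normc_inner_le x (M *m z))) _.
    by rewrite ler_sqr ?nnegrE ?sqnorm_ge0 ?normc_ge0 ?real_le_normc.
  by rewrite ler_wpM2l ?sqnorm_ge0.
have [->|z_neq0] := eqVneq (sqnorm z) 0; first by rewrite mulr_ge0 ?sqnorm_ge0.
have z_gt0 : 0 < sqnorm z by rewrite lt0r z_neq0 sqnorm_ge0.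
by move: z2; rewrite expr2 mulrCA mulrA ler_pM2r // mulrC.
Qed.

Lemma vnorm_mul_le_specnorm n (M : 'M[C]_n) x :
  sqnorm x = 1 -> vnorm (M *m x) <= specnorm M.
Proof.
move=> x1; apply: ub_le_sup; last by exists x => //; apply/vnorm_eq1.
exists (Num.sqrt (sqfrob M)) => _ [y /= /vnorm_eq1 y1 <-].
by rewrite ler_sqrt ?sqfrob_ge0 // -[sqfrob M]mulr1 -y1 sqnorm_mul_le_sqfrob.
Qed.

Lemma specnorm_ge0 n (M : 'M[C]_n) : (0 < n)%N -> 0 <= specnorm M.
Proof.
move=> n_gt0; have [x x1] := exists_sqnorm1 R n_gt0.
exact: le_trans (sqrtr_ge0 _) (vnorm_mul_le_specnorm M x1).
Qed.

Lemma sqop_bound_specnorm n (M : 'M[C]_n) : sqop_bound M (specnorm M ^+ 2).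
Proof.
move=> x; have [x0|x_neq0] := eqVneq (sqnorm x) 0.
  by rewrite (sqnorm_eq0 x0) mulmx0 sqnorm0 mulr0.
set c := Num.sqrt (sqnorm x).
have c_gt0 : 0 < c by rewrite sqrtr_gt0 lt0r x_neq0 sqnorm_ge0.
set y := (c^-1)%:C%C *: x.
have y1 : sqnorm y = 1.
  by rewrite sqnormZ exprVn sqr_sqrtr ?sqnorm_ge0 // mulVf.
have xy : x = c%:C%C *: y by rewrite /y scalerA -rmorphM divff ?gt_eqF // scale1r.
have My : sqnorm (M *m y) <= specnorm M ^+ 2.
  rewrite -(sqr_sqrtr (sqnorm_ge0 (M *m y))) ler_sqr ?nnegrE ?sqrtr_ge0 //.
    exact: vnorm_mul_le_specnorm.
  exact: le_trans (sqrtr_ge0 _) (vnorm_mul_le_specnorm M y1).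
clearbody y c; rewrite xy -scalemxAr !sqnormZ y1 mulr1 mulrC.
by rewrite ler_wpM2r ?sqr_ge0.
Qed.

Lemma specnorm_le n (M : 'M[C]_n) b : (0 < n)%N -> 0 <= b ->
  sqop_bound M (b ^+ 2) -> specnorm M <= b.
Proof.
move=> n_gt0 b0 bM; apply: ge_sup.
  have [x x1] := exists_sqnorm1 R n_gt0.
  by exists (vnorm (M *m x)), x => //; apply/vnorm_eq1.
move=> _ [x /= /vnorm_eq1 x1 <-].
rewrite /vnorm -/(sqnorm _) -(ger0_norm b0) -sqrtr_sqr ler_sqrt ?sqr_ge0 //.
by have := bM x; rewrite x1 mulr1.
Qed.

Lemma sqnorm_rdiag n (d : nat -> R) (x : 'cV[C]_n) :
  sqnorm (rdiag n d *m x) = \sum_(t < n) d t ^+ 2 * normc (x t 0) ^+ 2.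
Proof.
rewrite /sqnorm /rdiag mul_diag_mx; apply: eq_bigr => t _.
by rewrite !mxE ComplexField.Normc.normcM normc_real exprMn real_normK ?num_real.
Qed.

Lemma sqnorm_rdiag_le n (d : nat -> R) (m : R) (x : 'cV[C]_n) :
  (forall t : 'I_n, x t 0 = 0 \/ `|d t| <= m) ->
  sqnorm (rdiag n d *m x) <= m ^+ 2 * sqnorm x.
Proof.
move=> dm; rewrite sqnorm_rdiag /sqnorm mulr_sumr; apply: ler_sum => t _.
have [->|dtm] := dm t.
  by rewrite ComplexField.Normc.normc0 expr0n /= !mulr0.
rewrite ler_wpM2r ?sqr_ge0 // -real_normK ?num_real // ler_sqr ?nnegrE //.
exact: le_trans dtm.
Qed.

Lemma sqnorm_rdiag_ge n (d : nat -> R) (m : R) (x : 'cV[C]_n) : 0 <= m ->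
  (forall t : 'I_n, x t 0 = 0 \/ m <= `|d t|) ->
  m ^+ 2 * sqnorm x <= sqnorm (rdiag n d *m x).
Proof.
move=> m0 dm; rewrite sqnorm_rdiag /sqnorm mulr_sumr; apply: ler_sum => t _.
have [->|dtm] := dm t.
  by rewrite ComplexField.Normc.normc0 expr0n /= !mulr0.
by rewrite ler_wpM2r ?sqr_ge0 // -[d t ^+ 2]real_normK ?num_real // ler_sqr ?nnegrE.
Qed.

Lemma sum_sqr_col_le n (P M Q : 'M[C]_n) b j :
  unitary P -> adj Q *m Q = 1%:M -> sqop_bound M b ->
  \sum_k normc ((adj P *m M *m Q) k j) ^+ 2 <= b.
Proof.
move=> P_unitary Q_iso bM.
have -> : \sum_k normc ((adj P *m M *m Q) k j) ^+ 2 =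
          sqnorm (col j (adj P *m M *m Q)).
  by apply: eq_bigr => k _; rewrite !mxE.
rewrite colE -!mulmxA -colE sqnorm_isometry ?adjK //.
have col_j1 : sqnorm (col j Q) = 1.
  apply: complexI; rewrite sqnormC.
  transitivity ((adj Q *m Q) j j); last by rewrite Q_iso mxE eqxx.
  by rewrite !mxE; apply: eq_bigr => k _; rewrite !mxE.
by have := bM (col j Q); rewrite col_j1 mulr1.
Qed.

Lemma sum_sqr_row_le n (P M Q : 'M[C]_n) b k :
  unitary Q -> adj P *m P = 1%:M -> sqop_bound (adj M) b ->
  \sum_j normc ((adj P *m M *m Q) k j) ^+ 2 <= b.
Proof.
move=> Q_unitary P_iso bM.
have -> : \sum_j normc ((adj P *m M *m Q) k j) ^+ 2 =
          \sum_j normc ((adj Q *m adj M *m P) j k) ^+ 2.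
  rewrite -[P in adj Q *m _ *m P]adjK -!adjM mulmxA.
  by apply: eq_bigr => j _; rewrite /adj !mxE normc_conj.
exact: sum_sqr_col_le.
Qed.

End OperatorBound.

Section Spectrum.
Variables (R : realType) (n : nat) (d : nat -> R).
Hypothesis d_sorted : sorted_spectrum n d.

Lemma sorted_spectrum_ge0 j : 0 <= d j.
Proof.
have [_ [d_ge0 d_eq0]] := d_sorted.
by case: (ltnP j n) => [/d_ge0|/d_eq0 ->].
Qed.

Lemma sorted_spectrum_le j k : (j <= k)%N -> d k <= d j.
Proof.
have [d_le [_ d_eq0]] := d_sorted; move=> le_jk.
by case: (ltnP k n) => [/(d_le _ _ le_jk)|/d_eq0 ->]; rewrite ?sorted_spectrum_ge0.
Qed.

Lemma natr_mul_delta_star_le r : (0 < r)%N -> r%:R * delta_star d r <= d 0%N.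
Proof.
move=> r_gt0; set delta := delta_star d r.
have gaps : \sum_(j < r.-1) delta <= d 0%N - d r.-1.
  have <- : \sum_(0 <= j < r.-1) (d j - d j.+1) = d 0%N - d r.-1.
    rewrite (@telescope_sumr_eq _ 0 r.-1 (fun k => - d k)) //.
      by rewrite opprK addrC.
    by move=> k _; rewrite opprK addrC.
  rewrite big_mkord; apply: ler_sum => j _.
  rewrite -[d j - _]ger0_norm ?subr_ge0 ?sorted_spectrum_le //.
  exact: bigmin_le.
have last : delta <= d r.-1 by apply: bigmin_le_id.
rewrite sumr_const card_ord -mulr_natr in gaps.
rewrite -[r in r%:R]prednK // -natr1 mulrDl mul1r mulrC; lra.
Qed.

End Spectrum.

(* From l b + e1 = a s and l a + e2 = b s one gets (s^2 - l^2) a = s e1 + l e2,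
   and s^2 - l^2 = (s - l) (s + l). *)
Lemma sqr_gap_normc_le (R : realType) (l s : R) (a b e1 e2 : R[i]) :
  0 <= l -> 0 <= s ->
  l%:C%C * b + e1 = a * s%:C%C -> l%:C%C * a + e2 = b * s%:C%C ->
  (s - l) ^+ 2 * normc a ^+ 2 <= 2 * normc e1 ^+ 2 + 2 * normc e2 ^+ 2.
Proof.
move=> l0 s0 eq1 eq2.
have key : (s ^+ 2 - l ^+ 2)%:C%C * a = s%:C%C * e1 + l%:C%C * e2.
  have -> : e1 = a * s%:C%C - l%:C%C * b by rewrite -eq1 addrC addKr.
  have -> : e2 = b * s%:C%C - l%:C%C * a by rewrite -eq2 addrC addKr.
  by rewrite rmorphB !rmorphXn /=; ring.
have a0 := normc_ge0 a; have p0 := normc_ge0 e1; have q0 := normc_ge0 e2.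
have gap_a : `|s - l| * normc a <= normc e1 + normc e2.
  have [sl0|sl_neq0] := eqVneq (s + l) 0.
    have -> : s - l = 0 by lra.
    by rewrite normr0 mul0r addr_ge0.
  have sl_gt0 : 0 < s + l by rewrite lt0r sl_neq0 addr_ge0.
  rewrite -(ler_pM2r sl_gt0) mulrAC -(ger0_norm (ltW sl_gt0)) -normrM -subr_sqr.
  rewrite -normc_real -ComplexField.Normc.normcM key (ger0_norm (ltW sl_gt0)).
  apply: le_trans (le_normcD _ _) _.
  rewrite !ComplexField.Normc.normcM !normc_real !ger0_norm //; nra.
have : (`|s - l| * normc a) ^+ 2 <= (normc e1 + normc e2) ^+ 2.
  by rewrite ler_sqr ?nnegrE ?addr_ge0 ?mulr_ge0.
rewrite exprMn real_normK ?num_real //.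
have := sqr_ge0 (normc e1 - normc e2); nra.
Qed.

Lemma exists_kernel_rV (F : fieldType) m n (M : 'M[F]_(m, n)) :
  (n < m)%N -> exists2 u : 'rV_m, u != 0 & u *m M = 0.
Proof.
move=> lt_nm; have: kermx M != 0.
  rewrite kermx_eq0 /row_free; apply: contraTneq lt_nm => <-.
  by rewrite -leqNgt rank_leq_col.
by case/rowV0Pn=> u /sub_kermxP uM0 u0; exists u.
Qed.

Lemma exists_supported_kernel_cV (F : fieldType) n r (B : 'M[F]_n) :
  (r < n)%N -> exists2 c : 'cV_n, c != 0 &
    (forall t : 'I_n, (r < t)%N -> c t 0 = 0) /\
    (forall k : 'I_n, (k < r)%N -> (B *m c) k 0 = 0).
Proof.
move=> lt_rn; pose top : 'I_r.+1 -> 'I_n := widen_ord lt_rn.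
pose low : 'I_r -> 'I_n := widen_ord (ltnW lt_rn).
have [u u0 uM0] := exists_kernel_rV (mxsub low top B)^T (ltnSn r).
pose c : 'cV_n := colsub top 1%:M *m u^T.
have Bc : B *m c = colsub top B *m u^T by rewrite mulmxA mulmx_colsub mulmx1.
exists c; last split.
- have top_inj : injective top by move=> i j /(congr1 val) /= /val_inj.
  have cT : rowsub top c = u^T.
    rewrite -mul_rowsub_mx -mxsubrc -[RHS]mul1mx; congr (_ *m _).
    by apply/matrixP => i j; rewrite !mxE (inj_eq top_inj).
  apply: contra_neq u0 => c0; rewrite -[u]trmxK -cT c0.
  by apply/matrixP => i j; rewrite !mxE.
- move=> t lt_rt; rewrite mxE big1 // => j _; rewrite !mxE.
  case: eqP => [tj|]; last by rewrite mul0r.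
  by move: lt_rt; rewrite tj /= ltnNge -ltnS ltn_ord.
- move=> k lt_kr; have -> : k = low (Ordinal lt_kr) by apply: val_inj.
  have Nu0 : mxsub low top B *m u^T = 0.
    by rewrite -[mxsub _ _ _]trmxK -trmx_mul uM0 trmx0.
  suff -> : (B *m c) (low (Ordinal lt_kr)) 0 =
            (mxsub low top B *m u^T) (Ordinal lt_kr) 0.
    by rewrite Nu0 mxE.
  by rewrite Bc (mxsubrc low) mul_rowsub_mx [RHS]mxE.
Qed.

Section Perturbation.
Variable R : realType.
Local Notation C := R[i].
Variables (n r : nat) (Qs H V U W : 'M[C]_n) (lam s : nat -> R) (eta : R).
Hypotheses (V_unitary : unitary V) (U_unitary : unitary U) (W_unitary : unitary W).
Hypotheses (lam_sorted : sorted_spectrum n lam) (s_sorted : sorted_spectrum n s).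
Hypothesis Qs_eig : Qs = V *m rdiag n lam *m adj V.
Hypothesis Q_svd : Qs + H = U *m rdiag n s *m adj W.
Hypothesis H_bound : sqop_bound H (eta ^+ 2).

Let A := adj V *m U.
Let B := adj V *m W.
Let E1 := adj V *m H *m W.
Let E2 := adj V *m adj H *m U.
Let L := rdiag n lam.
Let S := rdiag n s.

Let adjH_bound : sqop_bound (adj H) (eta ^+ 2).
Proof. exact: sqop_bound_adj (sqr_ge0 _) H_bound. Qed.

Let adjV_Qs : adj V *m Qs = L *m adj V.
Proof. by rewrite Qs_eig !mulmxA (unitary_adj_mul V_unitary) mul1mx. Qed.

Lemma coupling_AB : L *m B + E1 = A *m S.
Proof.
have QW : (Qs + H) *m W = U *m S.
  by rewrite Q_svd -!mulmxA (unitary_adj_mul W_unitary) mulmx1.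
by rewrite /A -mulmxA -QW mulmxDl mulmxDr !mulmxA adjV_Qs.
Qed.

Lemma coupling_BA : L *m A + E2 = B *m S.
Proof.
have adj_Qs : adj Qs = Qs by rewrite Qs_eig !adjM adjK adj_rdiag mulmxA.
have QU : (Qs + adj H) *m U = W *m S.
  rewrite -adj_Qs -adjD Q_svd !adjM adjK adj_rdiag -!mulmxA.
  by rewrite (unitary_adj_mul U_unitary) mulmx1.
by rewrite /B -mulmxA -QU mulmxDl mulmxDr !mulmxA adjV_Qs.
Qed.

Lemma gap_entry_le (k j : 'I_n) :
  (s j - lam k) ^+ 2 * normc (A k j) ^+ 2 <=
  2 * normc (E1 k j) ^+ 2 + 2 * normc (E2 k j) ^+ 2.
Proof.
have eqAB : (lam k)%:C%C * B k j + E1 k j = A k j * (s j)%:C%C.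
  move/matrixP: coupling_AB => /(_ k j).
  by rewrite /L /S /rdiag mul_diag_mx mul_mx_diag !mxE.
have eqBA : (lam k)%:C%C * A k j + E2 k j = B k j * (s j)%:C%C.
  move/matrixP: coupling_BA => /(_ k j).
  by rewrite /L /S /rdiag mul_diag_mx mul_mx_diag !mxE.
exact: sqr_gap_normc_le (sorted_spectrum_ge0 lam_sorted k)
                        (sorted_spectrum_ge0 s_sorted j) eqAB eqBA.
Qed.

Lemma gap_col_sum_le (j : 'I_n) :
  \sum_(k < n) (s j - lam k) ^+ 2 * normc (A k j) ^+ 2 <= 4 * eta ^+ 2.
Proof.
apply: le_trans (ler_sum _ (fun (k : 'I_n) _ => gap_entry_le k j)) _.
rewrite big_split /= -!mulr_sumr.
have := sum_sqr_col_le j V_unitary (unitary_adj_mul W_unitary) H_bound.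
have := sum_sqr_col_le j V_unitary (unitary_adj_mul U_unitary) adjH_bound.
rewrite -/E1 -/E2; lra.
Qed.

Lemma gap_row_sum_le (k : 'I_n) :
  \sum_(j < n) (s j - lam k) ^+ 2 * normc (A k j) ^+ 2 <= 4 * eta ^+ 2.
Proof.
apply: le_trans (ler_sum _ (fun (j : 'I_n) _ => gap_entry_le k j)) _.
rewrite big_split /= -!mulr_sumr.
have := sum_sqr_row_le k W_unitary (unitary_adj_mul V_unitary) adjH_bound.
have := sum_sqr_row_le k U_unitary (unitary_adj_mul V_unitary) (M := adj H).
rewrite adjK => /(_ _ H_bound); rewrite -/E1 -/E2; lra.
Qed.

(* Courant-Fischer: test Qs + H on a nonzero vector W c in the span of the top
   r + 1 right singular vectors and orthogonal to the top r eigenvectors. *)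
Lemma weyl_sqr : s r ^+ 2 <= 2 * lam r ^+ 2 + 2 * eta ^+ 2.
Proof.
have [le_nr|lt_rn] := leqP n r.
  rewrite (proj2 (proj2 s_sorted) r le_nr) expr0n /=.
  by have := sqr_ge0 (lam r); have := sqr_ge0 eta; lra.
have [c c_neq0 [c_supp Bc_supp]] := exists_supported_kernel_cV B lt_rn.
have c_gt0 : 0 < sqnorm c.
  by rewrite lt0r sqnorm_ge0 andbT (contra_neq (@sqnorm_eq0 _ _ c) c_neq0).
have B_iso : adj B *m B = 1%:M.
  by rewrite adjM adjK mulmxA -(mulmxA (adj W)) V_unitary mulmx1 unitary_adj_mul.
have Qw : s r ^+ 2 * sqnorm c <= sqnorm ((Qs + H) *m (W *m c)).
  rewrite Q_svd -!mulmxA (mulmxA (adj W)) (unitary_adj_mul W_unitary) mul1mx.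
  rewrite sqnorm_isometry ?unitary_adj_mul //.
  apply: sqnorm_rdiag_ge (sorted_spectrum_ge0 s_sorted r) _ => t.
  have [le_tr|/c_supp] := leqP t r; [right | by left].
  by rewrite ger0_norm ?(sorted_spectrum_ge0 s_sorted)
                       ?(sorted_spectrum_le s_sorted).
have Qsw : sqnorm (Qs *m (W *m c)) <= lam r ^+ 2 * sqnorm c.
  rewrite Qs_eig -!mulmxA sqnorm_isometry ?unitary_adj_mul //.
  rewrite (mulmxA (adj V)) -/B -(sqnorm_isometry c B_iso).
  apply: sqnorm_rdiag_le => t; have [/Bc_supp|le_rt] := ltnP t r; [by left | right].
  by rewrite ger0_norm ?(sorted_spectrum_ge0 lam_sorted)
                       ?(sorted_spectrum_le lam_sorted).
have Hw : sqnorm (H *m (W *m c)) <= eta ^+ 2 * sqnorm c.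
  by rewrite -(sqnorm_isometry c (unitary_adj_mul W_unitary)); apply: H_bound.
have := sqnormD_le (Qs *m (W *m c)) (H *m (W *m c)); rewrite -mulmxDl => QHw.
rewrite -(ler_pM2r c_gt0); nra.
Qed.

Hypothesis le_rn : (r <= n)%N.

Let Sr := rdiag n (fun j => if (j < r)%N then s j else 0).
Let Z := L *m A - A *m Sr.

Lemma trunc_error_coords : Qs - trunc_r r U s = V *m Z *m adj U.
Proof.
have VA : V *m A = U by rewrite /A mulmxA V_unitary mul1mx.
have -> : Qs = V *m (L *m A) *m adj U.
  by rewrite Qs_eig -!mulmxA U_unitary mulmx1.
have -> : trunc_r r U s = V *m (A *m Sr) *m adj U.
  by rewrite /trunc_r -{1}VA !mulmxA.
by rewrite /Z mulmxBr mulmxBl.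
Qed.

(* For lam k > 2 s r and j >= r we have lam k <= 2 (lam k - s j), so these
   entries are controlled by the row gap bound; all other rows of the block
   j >= r have lam k <= 2 s r + lam r. *)
Let big_eig (k : nat) := (k < r)%N && (2 * s r < lam k).
Let Zhead := \matrix_(k, j)
  (if (j < r)%N then (lam k - s j)%:C%C * A k j else 0).
Let Zgap := \matrix_(k, j)
  (if (r <= j)%N && big_eig k then (lam k)%:C%C * A k j else 0).
Let Zrest := rdiag n (fun k => if big_eig k then 0 else lam k) *m A *m
             rdiag n (fun j => if (r <= j)%N then 1 else 0).

Lemma Z_split : Z = Zhead + Zgap + Zrest.
Proof.
apply/matrixP => k j; rewrite /Z /Zrest /rdiag !(mul_mx_diag, mul_diag_mx) !mxE.
by case: (ltnP j r) => _ /=; [rewrite rmorphB /= | case: (big_eig k) => /=]; ring.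
Qed.

Lemma sum_lt_r_const (a : R) : \sum_(j < n) (if (j < r)%N then a else 0) = r%:R * a.
Proof.
rewrite -big_mkcond /= -(big_ord_widen _ (fun _ => a) le_rn) sumr_const card_ord.
by rewrite mulr_natl.
Qed.

Lemma sqfrob_Zhead_le : sqfrob Zhead <= r%:R * (4 * eta ^+ 2).
Proof.
rewrite /sqfrob exchange_big /= -sum_lt_r_const; apply: ler_sum => j _.
case: ifP => lt_jr; last first.
  by rewrite big1 // => k _; rewrite mxE lt_jr normc_real normr0 expr0n.
apply: le_trans (gap_col_sum_le j); apply: ler_sum => k _.
rewrite mxE lt_jr ComplexField.Normc.normcM normc_real exprMn real_normK ?num_real //.
by rewrite -sqrrN opprB.
Qed.

Lemma sqfrob_Zgap_le : sqfrob Zgap <= r%:R * (16 * eta ^+ 2).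
Proof.
rewrite /sqfrob -sum_lt_r_const; apply: ler_sum => k _.
have [big_k|small_k] := boolP (big_eig k); last first.
  rewrite big1 => [|j _]; first by case: ifP; rewrite // mulr_ge0 ?ler0n ?sqr_ge0.
  by rewrite mxE (negbTE small_k) andbF normc_real normr0 expr0n.
have /andP [lt_kr gap_k] := big_k; rewrite lt_kr; have := gap_row_sum_le k.
suff : \sum_j normc (Zgap k j) ^+ 2 <=
       4 * \sum_(j < n) (s j - lam k) ^+ 2 * normc (A k j) ^+ 2 by lra.
rewrite mulr_sumr; apply: ler_sum => j _; rewrite mxE big_k andbT.
case: ifP => le_rj; last first.
  by rewrite normc_real normr0 expr0n /= mulr_ge0 ?ler0n // mulr_ge0 ?sqr_ge0.
rewrite ComplexField.Normc.normcM normc_real exprMn real_normK ?num_real //.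
rewrite mulrA ler_wpM2r ?sqr_ge0 //.
have := sorted_spectrum_le s_sorted le_rj; have := sorted_spectrum_ge0 s_sorted j.
move=> s_ge0 s_le; have -> : 4 * (s j - lam k) ^+ 2 = (2 * (lam k - s j)) ^+ 2 by ring.
rewrite ler_sqr ?nnegrE; lra.
Qed.

Lemma sqop_bound_Zrest : sqop_bound Zrest ((2 * s r + lam r) ^+ 2).
Proof.
move=> y; rewrite /Zrest -!mulmxA.
have lam_le t : `|if big_eig t then 0 else lam t| <= 2 * s r + lam r.
  have s_ge0 := sorted_spectrum_ge0 s_sorted r.
  have lam_ge0 := sorted_spectrum_ge0 lam_sorted r.
  rewrite /big_eig; case: ifP => [_|not_big]; first by rewrite normr0; lra.
  rewrite ger0_norm ?(sorted_spectrum_ge0 lam_sorted) //.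
  have [lt_tr|le_rt] := ltnP t r.
    by move: not_big; rewrite lt_tr /= => /negbT; rewrite -leNgt; lra.
  by have := sorted_spectrum_le lam_sorted le_rt; lra.
apply: le_trans (sqnorm_rdiag_le (fun t => or_intror (lam_le t))) _.
rewrite sqnorm_isometry ?adjK // sqnorm_isometry ?unitary_adj_mul //.
rewrite ler_wpM2l ?sqr_ge0 //.
apply: le_trans (sqnorm_rdiag_le (m := 1) _) _; last by rewrite expr1n mul1r.
by move=> t; right; case: ifP; rewrite ?normr1 ?normr0.
Qed.

Lemma sqop_bound_trunc_error :
  sqop_bound (Qs - trunc_r r U s)
             (3 * (20 * r%:R * eta ^+ 2 + (2 * s r + lam r) ^+ 2)).
Proof.
move=> x; rewrite trunc_error_coords -!mulmxA sqnorm_isometry ?unitary_adj_mul //.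
rewrite -(@sqnorm_isometry _ _ _ (adj U) x) ?adjK //.
set y := adj U *m x; rewrite Z_split !mulmxDl.
have y_ge0 := sqnorm_ge0 y.
have head := le_trans (sqnorm_mul_le_sqfrob Zhead y)
                      (ler_wpM2r y_ge0 sqfrob_Zhead_le).
have gap := le_trans (sqnorm_mul_le_sqfrob Zgap y)
                     (ler_wpM2r y_ge0 sqfrob_Zgap_le).
have rest := sqop_bound_Zrest y.
apply: le_trans (sqnormD3_le _ _ _) _; lra.
Qed.

End Perturbation.

Theorem specnorm_trunc_error_le (R : realType) n r (Qs H : 'M[R[i]]_n)
    (lam : nat -> R) (V U : 'M[R[i]]_n) (s : nat -> R) (W : 'M[R[i]]_n) :
  (0 < r)%N -> (r <= n)%N ->
  psd_eigendecomp Qs lam V -> svd (Qs + H) U s W ->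
  specnorm (Qs - trunc_r r U s) <= 11 * (lam r + r%:R * specnorm H).
Proof.
move=> r_gt0 le_rn [V_unitary [lam_sorted Qs_eig]].
move=> [U_unitary [W_unitary [s_sorted Q_svd]]].
have n_gt0 : (0 < n)%N := leq_trans r_gt0 le_rn.
have eta_ge0 := specnorm_ge0 H n_gt0.
have H_bound := sqop_bound_specnorm H.
have weyl := weyl_sqr r V_unitary U_unitary W_unitary lam_sorted s_sorted
                      Qs_eig Q_svd H_bound.
have err := sqop_bound_trunc_error V_unitary U_unitary W_unitary lam_sorted
                                   s_sorted Qs_eig Q_svd H_bound le_rn.
set eta := specnorm H in eta_ge0 weyl err *.
have lam_ge0 := sorted_spectrum_ge0 lam_sorted r.
have s_ge0 := sorted_spectrum_ge0 s_sorted r.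
have r_ge1 : 1 <= r%:R :> R by rewrite ler1n.
apply: specnorm_le => //; first by rewrite mulr_ge0 // addr_ge0 ?mulr_ge0.
move=> x; apply: le_trans (err x) _; rewrite ler_wpM2r ?sqnorm_ge0 //.
have : (2 * s r + lam r) ^+ 2 <= 18 * lam r ^+ 2 + 16 * eta ^+ 2.
  by have := sqr_ge0 (2 * s r - lam r); nra.
have : r%:R * eta ^+ 2 <= (r%:R * eta) ^+ 2.
  by rewrite exprMn ler_wpM2r ?sqr_ge0 // ler_eXnr.
have : eta <= r%:R * eta by rewrite ler_peMl.
nra.
Qed.

Lemma natr_mul_le_delta_star (R : realType) n (lam : nat -> R) r (eta : R) :
  (0 < r)%N -> sorted_spectrum n lam -> 0 <= eta ->
  eta <= delta_star lam r / 2 -> r%:R * eta <= lam 0%N / delta_star lam r * eta.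
Proof.
move=> r_gt0 lam_sorted eta_ge0 eta_le; have [->|eta_neq0] := eqVneq eta 0.
  by rewrite !mulr0.
have delta_gt0 : 0 < delta_star lam r.
  have : 0 < eta by rewrite lt0r eta_neq0.
  lra.
rewrite ler_wpM2r // ler_pdivlMr //.
exact: natr_mul_delta_star_le lam_sorted r r_gt0.
Qed.

Theorem lemma11 :
  exists C : nat,
  forall (R : realType) (n r : nat)
    (Qs H : 'M[R[i]]_n) (lam : nat -> R) (V : 'M[R[i]]_n)
    (U : 'M[R[i]]_n) (s : nat -> R) (W : 'M[R[i]]_n),
    (0 < r)%N -> (r <= n)%N ->
    psd_eigendecomp Qs lam V ->
    svd (Qs + H) U s W ->
    specnorm H <= delta_star lam r / 2 ->
    specnorm (Qs - trunc_r r U s)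
      <= C%:R * (lam r + lam 0%N / delta_star lam r * specnorm H).
Proof.
exists 11%N => R n r Qs H lam V U s W r_gt0 le_rn Qs_eig Q_svd H_small.
apply: le_trans (specnorm_trunc_error_le r_gt0 le_rn Qs_eig Q_svd) _.
rewrite ler_pM2l // lerD2l.
have [_ [lam_sorted _]] := Qs_eig.
apply: natr_mul_le_delta_star lam_sorted _ H_small => //.
exact: specnorm_ge0 (leq_trans r_gt0 le_rn).
Qed.
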